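(* For $i\ge1$ let $u^i:[0,1]\to{\bf Q}_2(\mathbb{R})$ be the pluri-diamond with $u^i(1/3)=2[[0]]$ which is a diamond exactly above the closed middle-third intervals removed in the first $i$ steps of the construction of the Cantor ternary set (i.e. above $[1/3,2/3]$ for $i=1$; above $[1/3,2/3],[1/9,2/9],[7/9,8/9]$ for $i=2$; etc.) and is of the form $x\mapsto2[[x+p]]$ on each remaining interval. Write $u^i=[[u^i_{\min}]]+[[u^i_{\max}]]$ with $u^i_{\min}\le u^i_{\max}$. Suppose that along a subsequence $u^i_{\min}\to u_{\min}$ and $u^i_{\max}\to u_{\max}$ uniformly on $[0,1]$, and set $u=[[u_{\min}]]+[[u_{\max}]]$. Then $u$ is a Dirichlet $4$-quasiminimizer on $(0,1)$ (for every interval $(a,b)\subset(0,1)$, $\mathrm{Dir}(u;(a,b))\le4\,\mathrm{Dir}(v;(a,b))$ with $v$ Dirichlet minimizing on $(a,b)$ with $v(a)=u(a)$, $v(b)=u(b)$), and the branch set of $u$ is the Cantor ternary set $T$.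
   Context: ${\bf Q}_2(\mathbb{R})$ is the space of unordered pairs $[[x]]+[[y]]$ of reals with metric $\mathcal{G}([[x_1]]+[[x_2]],[[y_1]]+[[y_2]])=\min_\sigma(\sum_i|x_i-y_{\sigma(i)}|^2)^{1/2}$. For Lipschitz $u=[[u_1]]+[[u_2]]$ with $u_1\le u_2$, $\mathrm{Dir}(u;I)=\int_I(u_1')^2+(u_2')^2dx$; Dirichlet minimizing with given endpoint values means minimizing $\mathrm{Dir}$ among (Sobolev) ${\bf Q}_2(\mathbb{R})$-valued maps with those endpoint values. A diamond above $[a,b]$ is a map whose graph is the parallelogram with vertices $(a,h),((a+b)/2,h),((a+b)/2,h+(b-a)/2),(b,h+(b-a)/2)$ for some $h\in\mathbb{R}$. A pluri-diamond is a continuous $u:[0,1]\to{\bf Q}_2(\mathbb{R})$ admitting a partition of $[0,1]$ into intervals on each of which $u$ is a diamond or of the form $x\mapsto2[[x+p]]$, $p\in\mathbb{R}$. For a continuous multiple-valued $u$, let $\sigma(x)=\mathrm{card}(\mathrm{spt}\,u(x))$; the branch set of $u$ is the set of points where $\sigma$ is discontinuous. $T=\bigcap_iT_i$ with $T_1=[0,1/3]\cup[2/3,1]$, $T_2=[0,1/9]\cup[2/9,1/3]\cup[2/3,7/9]\cup[8/9,1]$, etc. *)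

From HB Require Import structures.
From mathcomp Require Import all_boot all_order all_algebra.
From mathcomp Require Import all_classical all_reals all_analysis.
Set Implicit Arguments. Unset Strict Implicit. Unset Printing Implicit Defensive.
Import Order.TTheory GRing.Theory Num.Theory.
Import numFieldNormedType.Exports.
Local Open Scope classical_set_scope.
Local Open Scope ring_scope.

(* cantor_idx k m : m < 3^k has k ternary digits, all in {0,2}.
   The closed intervals [m/3^k, (m+1)/3^k] with cantor_idx k m are
   exactly the components of T_k (T_0 = [0,1]). *)
Fixpoint cantor_idx (k m : nat) : bool :=
  if k is k'.+1 then ((m %% 3) != 1)%N && cantor_idx k' (m %/ 3)
  else (m == 0)%N.

Section Defs.
Variable R : realType.

Definition T_step (i : nat) : set R :=
  [set x | exists m : nat, cantor_idx i m /\
       (m%:R / 3 ^+ i <= x <= m.+1%:R / 3 ^+ i)].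

Definition cantorT : set R := [set x | forall i : nat, (0 < i)%N -> T_step i x].

(* The sorted pair (lo, hi) is a diamond above [a,b]: its graph is the
   boundary of the parallelogram with vertices (a,h), ((a+b)/2,h),
   ((a+b)/2,h+(b-a)/2), (b,h+(b-a)/2). *)
Definition diamond_on (a b : R) (lo hi : R -> R) : Prop :=
  exists h : R, forall x, a <= x <= b ->
    lo x = h + Num.max 0 (x - (a + b) / 2) /\
    hi x = h + Num.min (x - a) ((b - a) / 2).

Definition double_line_on (a b : R) (lo hi : R -> R) : Prop :=
  exists p : R, forall x, a <= x <= b -> lo x = x + p /\ hi x = x + p.

(* u^i = [[lo]] + [[hi]] (lo <= hi) is the pluri-diamond with u^i(1/3) = 2[[0]]
   which is a diamond above each middle-third interval removed at steps
   1..i (at step k: [(3m+1)/3^k, (3m+2)/3^k] with [m/3^(k-1),(m+1)/3^(k-1)]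
   a component of T_(k-1)) and of the form 2[[x+p]] on each component of T_i. *)
Definition cantor_pluridiamond (i : nat) (lo hi : R -> R) : Prop :=
  ({within `[0, 1], continuous lo} /\ {within `[0, 1], continuous hi}) /\
  [/\ (forall x, 0 <= x <= 1 -> lo x <= hi x),
      lo (1 / 3) = 0, hi (1 / 3) = 0,
      (forall k m : nat, (0 < k <= i)%N -> cantor_idx k.-1 m ->
          diamond_on ((3 * m + 1)%:R / 3 ^+ k) ((3 * m + 2)%:R / 3 ^+ k) lo hi) &
      (forall m : nat, cantor_idx i m ->
          double_line_on (m%:R / 3 ^+ i) (m.+1%:R / 3 ^+ i) lo hi)].

Definition unif_cvg01 (f : nat -> R -> R) (g : R -> R) : Prop :=
  forall e : R, 0 < e -> exists N : nat, forall n : nat, (N <= n)%N ->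
    forall x, 0 <= x <= 1 -> `|f n x - g x| < e.

Definition Dir (f1 f2 : R -> R) (a b : R) : \bar R :=
  (\int[lebesgue_measure]_(x in `[a, b]) ((derive1 f1 x) ^+ 2 + (derive1 f2 x) ^+ 2)%:E)%E.

(* real-valued W^{1,2}(a,b), via its absolutely continuous representative on [a,b] *)
Definition W12 (a b : R) (f : R -> R) : Prop :=
  exists g : R -> R,
    measurable_fun `[a, b] g /\
    (\int[lebesgue_measure]_(x in `[a, b]) ((g x) ^+ 2)%:E < +oo)%E /\
    forall x, a <= x <= b ->
      f x = f a + Rintegral lebesgue_measure `[a, x] g.

(* Q_2(R)-valued Sobolev maps on (a,b) written as sorted pairs v1 <= v2,
   with endpoint values v(a) = [[ya1]]+[[ya2]], v(b) = [[yb1]]+[[yb2]]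
   (ya1 <= ya2, yb1 <= yb2). *)
Definition competitor (a b ya1 ya2 yb1 yb2 : R) (v1 v2 : R -> R) : Prop :=
  [/\ W12 a b v1, W12 a b v2 & (forall x, a <= x <= b -> v1 x <= v2 x)] /\
  [/\ v1 a = ya1, v2 a = ya2, v1 b = yb1 & v2 b = yb2].

Definition dir_minimizing (a b ya1 ya2 yb1 yb2 : R) (v1 v2 : R -> R) : Prop :=
  competitor a b ya1 ya2 yb1 yb2 v1 v2 /\
  forall w1 w2, competitor a b ya1 ya2 yb1 yb2 w1 w2 ->
    (Dir v1 v2 a b <= Dir w1 w2 a b)%E.

Definition dir_quasiminimizer (K : R) (umin umax : R -> R) : Prop :=
  forall a b : R, 0 <= a -> a < b -> b <= 1 ->
    forall v1 v2 : R -> R,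
      dir_minimizing a b (umin a) (umax a) (umin b) (umax b) v1 v2 ->
      (Dir umin umax a b <= K%:E * Dir v1 v2 a b)%E.

Definition card_spt (umin umax : R -> R) (x : R) : R :=
  if umin x == umax x then 1 else 2.

Definition branch_set (umin umax : R -> R) : set R :=
  [set x : R | 0 <= x <= 1 /\
     ~ (card_spt umin umax @ within `[0, 1] (nbhs x) --> card_spt umin umax x)].

End Defs.

From HB Require Import structures.
From mathcomp Require Import all_boot all_order all_algebra.
From mathcomp Require Import all_classical all_reals all_analysis.
From mathcomp Require Import ring lra zify measurable_realfun.
Set Implicit Arguments. Unset Strict Implicit. Unset Printing Implicit Defensive.
Import Order.TTheory GRing.Theory Num.Theory.
Import numFieldNormedType.Exports.
Local Open Scope classical_set_scope.
Local Open Scope ring_scope.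

(* Every u^i has [pinched_slopes] on each [y, z] inside [0, 1]: both branches are
   nondecreasing and 1-Lipschitz, and together they rise by at least z - y. This is
   checked on each diamond and each double line, extends to [0, 1] by continuous
   induction and survives uniform limits. Hence Dir(u; (a, b)) <= 2 (b - a), whereas by
   Cauchy-Schwarz a competitor v with the endpoint values of u has
   Dir(v; (a, b)) >= (d1^2 + d2^2) / (b - a) >= (b - a) / 2, where d1 + d2 >= b - a are
   the increments of the two branches of u.
   The diamond above a removed interval has the same gap hi - lo at every later stage,
   so the branches of u stay apart there, while on T the two branches of every u^i
   coincide; since every point of T is a limit of removed intervals, sigma jumps
   exactly on T. *)

(* Continuous induction: the supremum of the [t] in [[y, z]] with [P y t] is such a
   [t] by the left-local hypothesis, and equals [z] by the right-local one. *)
Lemma itv_local_to_global (R : realType) (P : R -> R -> Prop) (c d : R) :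
  (forall y, P y y) ->
  (forall y z w, y <= z -> z <= w -> P y z -> P z w -> P y w) ->
  (forall x, c <= x -> x < d -> exists2 e, 0 < e &
      forall z, x <= z -> z <= d -> z < x + e -> P x z) ->
  (forall x, c < x -> x <= d -> exists2 e, 0 < e &
      forall y, c <= y -> y <= x -> x - e < y -> P y x) ->
  forall y z, c <= y -> y <= z -> z <= d -> P y z.
Proof.
move=> Prefl Ptrans Pright Pleft y z cy yz zd.
pose A := [set t | y <= t <= z /\ P y t].
have Ay : A y by split; [apply/andP; split; lra | exact: Prefl].
have supA : has_sup A by split; [exists y | exists z => t [/andP[]]].
set s := sup A.
have sz : s <= z by apply: ge_sup; [exists y | move=> t [/andP[]]].
have ys : y <= s := sup_upper_bound supA Ay.
have As : A s.
  have [<-|ys'] := eqVneq y s; first by [].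
  have {ys'}ys : y < s by rewrite lt_neqAle ys' ys.
  have [e e0 He] := Pleft s (ltac:(lra)) (ltac:(lra)).
  have [t At] := sup_adherent e0 supA; rewrite -/s => ts.
  have ts' : t <= s := sup_upper_bound supA At.
  case: At => /andP[yt tz] Pyt.
  split; first by apply/andP; split; lra.
  by apply: (Ptrans y t) => //; apply: He; lra.
have [<-|sz'] := eqVneq s z; first by case: As.
have {sz'}sz : s < z by rewrite lt_neqAle sz' sz.
have [e e0 He] := Pright s (ltac:(lra)) (ltac:(lra)).
pose t := Num.min (s + e / 2) z.
have st : s < t by rewrite /t lt_min; apply/andP; split; lra.
have tz : t <= z by rewrite /t ge_min lexx orbT.
have tse : t < s + e by rewrite /t gt_min; apply/orP; left; lra.
clearbody t.
have At : A t.
  case: As => _ Pys; split; first by apply/andP; split; lra.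
  by apply: (Ptrans y s) => //; [lra | apply: He; lra].
by have := sup_upper_bound supA At; rewrite -/s; lra.
Qed.

Section PinchedSlopes.
Variable R : realType.

Definition pinched_slopes (lo hi : R -> R) (y z : R) : Prop :=
  [/\ 0 <= lo z - lo y <= z - y, 0 <= hi z - hi y <= z - y &
      z - y <= (lo z - lo y) + (hi z - hi y)].

Lemma pinched_slopes_refl lo hi y : pinched_slopes lo hi y y.
Proof. by split; rewrite !subrr ?lexx ?addr0. Qed.

Lemma pinched_slopes_trans lo hi y z w : y <= z -> z <= w ->
  pinched_slopes lo hi y z -> pinched_slopes lo hi z w -> pinched_slopes lo hi y w.
Proof.
move=> yz zw [/andP[? ?] /andP[? ?] ?] [/andP[? ?] /andP[? ?] ?].
by split; [apply/andP; split.. |]; lra.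
Qed.

Lemma diamond_pinched a b lo hi y z : diamond_on a b lo hi ->
  a <= y -> y <= z -> z <= b -> pinched_slopes lo hi y z.
Proof.
move=> [h H] ay yz zb; rewrite /pinched_slopes.
have [-> ->] := H y (ltac:(apply/andP; split; lra)).
have [-> ->] := H z (ltac:(apply/andP; split; lra)).
case: (leP 0 (y - (a + b) / 2)) => ?; case: (leP 0 (z - (a + b) / 2)) => ?;
case: (leP (y - a) ((b - a) / 2)) => ?; case: (leP (z - a) ((b - a) / 2)) => ?;
by split; [apply/andP; split.. |]; lra.
Qed.

Lemma double_line_pinched a b lo hi y z : double_line_on a b lo hi ->
  a <= y -> y <= z -> z <= b -> pinched_slopes lo hi y z.
Proof.
move=> [p H] ay yz zb; rewrite /pinched_slopes.
have [-> ->] := H y (ltac:(apply/andP; split; lra)).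
have [-> ->] := H z (ltac:(apply/andP; split; lra)).
by split; [apply/andP; split.. |]; lra.
Qed.

Lemma pinched_slopes_approx (lo hi : R -> R) y z :
  (forall e, 0 < e -> exists l h, pinched_slopes l h y z /\
     [/\ `|l y - lo y| < e, `|l z - lo z| < e, `|h y - hi y| < e & `|h z - hi z| < e]) ->
  pinched_slopes lo hi y z.
Proof.
move=> approx.
split; [apply/andP; split.. |]; apply/ler_addgt0Pr => e e0;
  have [l [h [[/andP[? ?] /andP[? ?] ?] []]]] := approx (e / 8) (ltac:(lra));
  rewrite !ltr_distl => /andP[? ?] /andP[? ?] /andP[? ?] /andP[? ?]; lra.
Qed.

Lemma diamond_gap (a b : R) lo hi x : diamond_on a b lo hi -> a <= x <= b ->
  hi x - lo x = Num.min (x - a) ((b - a) / 2) - Num.max 0 (x - (a + b) / 2).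
Proof. by move=> [h H] /H [-> ->]; rewrite opprD addrACA subrr add0r. Qed.

Lemma diamond_gap_gt0 (a b x : R) : a < x < b ->
  0 < Num.min (x - a) ((b - a) / 2) - Num.max 0 (x - (a + b) / 2).
Proof.
move=> /andP[ax xb].
by case: (leP (x - a) ((b - a) / 2)); case: (leP 0 (x - (a + b) / 2)); lra.
Qed.

End PinchedSlopes.

Lemma cantor_idx_mul3 i m : cantor_idx i.+1 (3 * m) = cantor_idx i m.
Proof.
rewrite /= (_ : (3 * m) %% 3 = 0)%N; last lia.
by rewrite (_ : (3 * m) %/ 3 = m)%N; last lia.
Qed.

Lemma cantor_idx_mul3D2 i m : cantor_idx i.+1 (3 * m + 2) = cantor_idx i m.
Proof.
rewrite /= (_ : (3 * m + 2) %% 3 = 2)%N; last lia.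
by rewrite (_ : (3 * m + 2) %/ 3 = m)%N; last lia.
Qed.

Lemma cantor_idx_lt i m : cantor_idx i m -> (m < 3 ^ i)%N.
Proof.
elim: i m => [m /eqP -> //|i IH m /= /andP[_ /IH]].
by rewrite expnS; lia.
Qed.

Section CantorGeometry.
Variable R : realType.

Lemma cantor_component_le1 i m : cantor_idx i m -> m.+1%:R / 3 ^+ i <= 1 :> R.
Proof.
move/cantor_idx_lt => lt_m.
by rewrite ler_pdivrMr ?exprn_gt0 // mul1r -natrX ler_nat.
Qed.

Lemma removed_itv_le1 k m : (0 < k)%N -> cantor_idx k.-1 m ->
  (3 * m + 2)%:R / 3 ^+ k <= 1 :> R.
Proof.
move=> k0; rewrite -cantor_idx_mul3D2 prednK // => /cantor_component_le1.
apply: le_trans; rewrite ler_pM2r ?invr_gt0 ?exprn_gt0 // ler_nat; lia.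
Qed.

Lemma cantorT_01 (x : R) : cantorT x -> 0 <= x <= 1.
Proof.
move=> /(_ 1%N isT) [m [/cantor_component_le1 m1 /andP[mx xm]]].
by apply/andP; split; [apply: le_trans mx | apply: le_trans m1].
Qed.

Lemma ternary_cover (InC InR : R -> R -> R -> Prop) x :
  InC 0 1 x ->
  (forall a t, 0 < t -> InC a (a + 3 * t) x ->
     [\/ InC a (a + t) x, InR (a + t) (a + 2 * t) x | InC (a + 2 * t) (a + 3 * t) x]) ->
  forall i, (exists m, cantor_idx i m /\ InC (m%:R / 3 ^+ i) (m.+1%:R / 3 ^+ i) x) \/
    (exists k m, [/\ (0 < k <= i)%N, cantor_idx k.-1 m &
       InR ((3 * m + 1)%:R / 3 ^+ k) ((3 * m + 2)%:R / 3 ^+ k) x]).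
Proof.
move=> C01 split3; elim=> [|i [[m [cm Cm]]|[k [m [ki cm Rm]]]]].
- by left; exists 0%N; rewrite expr0 !divr1.
- set t := (3 ^+ i.+1 : R)^-1; set a := (3 * m)%:R * t.
  have t0 : 0 < t by rewrite invr_gt0 exprn_gt0.
  have a_t j : (3 * m + j)%:R * t = a + j%:R * t by rewrite natrD mulrDl.
  have lo_a : m%:R / 3 ^+ i = a by rewrite /a /t exprS natrM; field.
  have hi_a : m.+1%:R / 3 ^+ i = a + 3 * t.
    by rewrite /a /t exprS -addn1 natrD natrM; field.
  rewrite lo_a hi_a in Cm.
  case: (split3 a t t0 Cm) => [C1|R2|C3].
  + left; exists (3 * m)%N.
    by rewrite cantor_idx_mul3 -/t -[(3 * m).+1]addn1 a_t mulr1n mul1r.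
  + right; exists i.+1, m.
    by rewrite ltn0Sn leqnn -/t !a_t mulr1n mul1r.
  + left; exists (3 * m + 2)%N.
    by rewrite cantor_idx_mul3D2 -/t -[(3 * m + 2).+1]addn1 -addnA !a_t.
- by right; exists k, m; split => //; lia.
Qed.

Lemma not_cantorT_removed (x : R) : 0 <= x <= 1 -> ~ cantorT x ->
  exists k m, [/\ (0 < k)%N, cantor_idx k.-1 m &
    (3 * m + 1)%:R / 3 ^+ k < x < (3 * m + 2)%:R / 3 ^+ k].
Proof.
move=> x01 nTx.
have [i i0 nTi] : exists2 i, (0 < i)%N & ~ T_step i x.
  apply: contra_notP nTx => nex i i0.
  by apply: contrapT => nTi; apply: nex; exists i.
have split3 a t : 0 < t -> a <= x <= a + 3 * t ->
    [\/ a <= x <= a + t, a + t < x < a + 2 * t | a + 2 * t <= x <= a + 3 * t].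
  move=> t0 /andP[ax xa].
  case: (leP x (a + t)) => c1; first by apply: Or31; apply/andP.
  case: (ltP x (a + 2 * t)) => c2; first by apply: Or32; apply/andP.
  by apply: Or33; apply/andP.
have [[m [cm Cm]]|[k [m [/andP[k0 _] cm Rm]]]] :=
  @ternary_cover (fun p q x => p <= x <= q) (fun p q x => p < x < q) x x01 split3 i.
- by case: nTi; exists m.
- by exists k, m.
Qed.

Lemma removed_itv_sub01 k m (x : R) : (0 < k)%N -> cantor_idx k.-1 m ->
  (3 * m + 1)%:R / 3 ^+ k < x < (3 * m + 2)%:R / 3 ^+ k -> 0 <= x <= 1.
Proof.
move=> k0 cm /andP[mx xm]; have := removed_itv_le1 k0 cm.
have : 0 <= (3 * m + 1)%:R / 3 ^+ k :> R by rewrite divr_ge0.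
by move=> *; apply/andP; split; lra.
Qed.

Lemma cantorT_removed_near (x : R) N : cantorT x ->
  exists k m t, [/\ (0 < k)%N, cantor_idx k.-1 m,
    (3 * m + 1)%:R / 3 ^+ k < t < (3 * m + 2)%:R / 3 ^+ k & `|t - x| < (3 ^+ N)^-1].
Proof.
move=> /(_ N.+1 isT) [m [cm /andP[mx xm]]].
set e := (3 ^+ N.+2 : R)^-1.
have e0 : 0 < e by rewrite invr_gt0 exprn_gt0.
have lo_e : m%:R / 3 ^+ N.+1 = (3 * m)%:R * e.
  by rewrite /e natrM !exprS; field.
have hi_e : m.+1%:R / 3 ^+ N.+1 = (3 * m)%:R * e + 3 * e.
  by rewrite /e -addn1 natrD natrM !exprS; field.
have N_e : (3 ^+ N)^-1 = 9 * e by rewrite /e !exprS; field.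
rewrite lo_e hi_e in mx xm.
exists N.+2, m, ((3 * m)%:R * e + 3 / 2 * e); split => //.
  by rewrite -/e !natrD mulrDl mulrDl; apply/andP; split; lra.
by rewrite N_e ltr_norml; apply/andP; split; lra.
Qed.

Lemma pluridiamond_pinched i (lo hi : R -> R) : cantor_pluridiamond i lo hi ->
  forall y z, 0 <= y -> y <= z -> z <= 1 -> pinched_slopes lo hi y z.
Proof.
move=> [_ [_ _ _ diamond line]].
apply: itv_local_to_global; [exact: pinched_slopes_refl | exact: pinched_slopes_trans | |].
- move=> x x0 x1.
  have split3 a t : 0 < t -> a <= x < a + 3 * t ->
      [\/ a <= x < a + t, a + t <= x < a + 2 * t | a + 2 * t <= x < a + 3 * t].
    move=> t0 /andP[ax xa].
    case: (ltP x (a + t)) => c1; first by apply: Or31; apply/andP.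
    case: (ltP x (a + 2 * t)) => c2; first by apply: Or32; apply/andP.
    by apply: Or33; apply/andP.
  have [[m [cm /andP[mx xm]]]|[k [m [ki cm /andP[kx xk]]]]] :=
    @ternary_cover (fun p q x => p <= x < q) (fun p q x => p <= x < q) x
      (ltac:(apply/andP; split; lra)) split3 i.
  + exists (m.+1%:R / 3 ^+ i - x) => [|z xz _ zm]; first lra.
    by apply: (double_line_pinched (line m cm)); lra.
  + exists ((3 * m + 2)%:R / 3 ^+ k - x) => [|z xz _ zk]; first lra.
    by apply: (diamond_pinched (diamond k m ki cm)); lra.
- move=> x x0 x1.
  have split3 a t : 0 < t -> a < x <= a + 3 * t ->
      [\/ a < x <= a + t, a + t < x <= a + 2 * t | a + 2 * t < x <= a + 3 * t].
    move=> t0 /andP[ax xa].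
    case: (leP x (a + t)) => c1; first by apply: Or31; apply/andP.
    case: (leP x (a + 2 * t)) => c2; first by apply: Or32; apply/andP.
    by apply: Or33; apply/andP.
  have [[m [cm /andP[mx xm]]]|[k [m [ki cm /andP[kx xk]]]]] :=
    @ternary_cover (fun p q x => p < x <= q) (fun p q x => p < x <= q) x
      (ltac:(apply/andP; split; lra)) split3 i.
  + exists (x - m%:R / 3 ^+ i) => [|y _ yx my]; first lra.
    by apply: (double_line_pinched (line m cm)); lra.
  + exists (x - (3 * m + 1)%:R / 3 ^+ k) => [|y _ yx ky]; first lra.
    by apply: (diamond_pinched (diamond k m ki cm)); lra.
Qed.

End CantorGeometry.

Lemma exists_inv_pow3_lt (R : realType) (r : R) : 0 < r -> exists N, (3 ^+ N : R)^-1 < r.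
Proof.
move=> r0; exists (Num.Def.archi_bound r^-1).
set N := Num.Def.archi_bound r^-1.
have rN : r^-1 < N%:R by apply: archi_boundP; rewrite invr_ge0 ltW.
have N3N : (N%:R : R) <= 3 ^+ N by rewrite -natrX ler_nat ltnW // ltn_expl.
by rewrite invf_plt ?posrE ?exprn_gt0 //; lra.
Qed.

Section CantorLimit.
Variables (R : realType) (lo hi : nat -> R -> R) (phi : nat -> nat) (umin umax : R -> R).
Hypothesis pluri : forall i, (0 < i)%N -> cantor_pluridiamond i (lo i) (hi i).
Hypothesis phi_incr : {homo phi : m n / (m < n)%N}.
Hypothesis lo_cvg : unif_cvg01 (fun n => lo (phi n)) umin.
Hypothesis hi_cvg : unif_cvg01 (fun n => hi (phi n)) umax.

Lemma leq_phi n : (n <= phi n)%N.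
Proof. by elim: n => // n IH; have := phi_incr (ltnSn n); lia. Qed.

Lemma subseq_close k e : 0 < e -> exists2 n, (k < phi n)%N &
  forall x, 0 <= x <= 1 -> `|lo (phi n) x - umin x| < e /\ `|hi (phi n) x - umax x| < e.
Proof.
move=> e0; have [N1 close1] := lo_cvg e0; have [N2 close2] := hi_cvg e0.
set n := maxn (maxn N1 N2) k.+1; have := leq_phi n.
exists n => [|x x01]; first lia.
by split; [apply: close1 | apply: close2] => //; lia.
Qed.

Lemma limit_pinched y z : 0 <= y -> y <= z -> z <= 1 -> pinched_slopes umin umax y z.
Proof.
move=> y0 yz z1; apply: pinched_slopes_approx => e e0.
have [n n0 close] := subseq_close 0 e0.
exists (lo (phi n)), (hi (phi n)).
split; first exact: (pluridiamond_pinched (pluri n0)).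
have [? ?] := close y (ltac:(apply/andP; split; lra)).
by have [? ?] := close z (ltac:(apply/andP; split; lra)).
Qed.

Lemma limit_eq_on_cantor x : cantorT x -> umin x = umax x.
Proof.
move=> Tx; apply/eqP; rewrite -subr_eq0 -normr_le0.
apply/ler_addgt0Pr => e e0; rewrite add0r.
have [n n0 close] := subseq_close 0 (ltac:(lra) : 0 < e / 2).
have [m [cm xm]] := Tx (phi n) n0.
have [_ [_ _ _ _ line]] := pluri n0.
have [p /(_ x xm) [lo_x hi_x]] := line m cm.
have [] := close x (cantorT_01 Tx); rewrite lo_x hi_x !ltr_distl ler_norml.
by move=> /andP[? ?] /andP[? ?]; apply/andP; split; lra.
Qed.

Lemma limit_lt_on_removed k m x : (0 < k)%N -> cantor_idx k.-1 m ->
  (3 * m + 1)%:R / 3 ^+ k < x < (3 * m + 2)%:R / 3 ^+ k -> umin x < umax x.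
Proof.
move=> k0 cm xkm.
have /andP[ax xb] := xkm.
have [n kn close] := subseq_close k (divr_gt0 (diamond_gap_gt0 xkm) (ltr0Sn _ 1)).
have [_ [_ _ _ diamond _]] := pluri (leq_ltn_trans (leq0n k) kn).
have kn' : (0 < k <= phi n)%N by rewrite k0 ltnW.
have xab : (3 * m + 1)%:R / 3 ^+ k <= x <= (3 * m + 2)%:R / 3 ^+ k.
  by apply/andP; split; apply: ltW.
have := diamond_gap (diamond k m kn' cm) xab.
have [] := close x (removed_itv_sub01 k0 cm xkm).
move: (diamond_gap_gt0 xkm); set gap := (X in 0 < X) => gap0.
clearbody gap; rewrite !ltr_distl => /andP[? ?] /andP[? ?] ?; lra.
Qed.

Lemma card_spt_removed k m x : (0 < k)%N -> cantor_idx k.-1 m ->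
  (3 * m + 1)%:R / 3 ^+ k < x < (3 * m + 2)%:R / 3 ^+ k -> card_spt umin umax x = 2.
Proof.
move=> k0 cm /(limit_lt_on_removed k0 cm).
by rewrite /card_spt lt_neqAle => /andP[/negbTE ->].
Qed.

Lemma card_spt_cvg_off_cantor x : 0 <= x <= 1 -> ~ cantorT x ->
  card_spt umin umax @ within `[0, 1] (nbhs x) --> card_spt umin umax x.
Proof.
move=> x01 /(not_cantorT_removed x01) [k [m [k0 cm xkm]]].
rewrite (card_spt_removed k0 cm xkm); apply: cvg_near_cst.
rewrite near_withinE; near=> y => _.
apply: (card_spt_removed k0 cm); near: y.
by apply: near_in_itvoo; rewrite in_itv.
Unshelve. all: by end_near.
Qed.

Lemma cantorT_sub_branch_set x : cantorT x -> branch_set umin umax x.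
Proof.
move=> Tx; split; first exact: cantorT_01.
move=> /cvgrPdist_lt /(_ (1 / 2) ltac:(lra)).
rewrite near_withinE => /nbhs_ballP [r r0 near_x].
have [N Nr] := exists_inv_pow3_lt r0.
have [k [m [t [k0 cm tkm tx]]]] := cantorT_removed_near N Tx.
have xt : ball x r t by rewrite /ball /= distrC; lra.
have := near_x t xt; rewrite /= in_itv /= => /(_ (removed_itv_sub01 k0 cm tkm)).
rewrite (card_spt_removed k0 cm tkm) /card_spt (limit_eq_on_cantor Tx) eqxx.
by rewrite ltr_norml; lra.
Qed.

Lemma branch_set_eq_cantor : branch_set umin umax = @cantorT R.
Proof.
apply/seteqP; split => [x [x01]|]; last exact: cantorT_sub_branch_set.
by apply: contra_notP; exact: card_spt_cvg_off_cantor.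
Qed.

End CantorLimit.

Lemma derive1_unit_slope (R : realType) (F : R -> R) (c d x : R) :
  (forall y z, c <= y -> y <= z -> z <= d -> 0 <= F z - F y <= z - y) ->
  c < x -> x < d -> 0 <= derive1 F x <= 1.
Proof.
move=> incr cx xd.
pose q h := h^-1 * (F (h + x) - F x).
have -> : derive1 F x = lim (q @ 0^') by [].
have [q_cvg|q_dvg] := pselect (cvg (q @ 0^')); last first.
  by rewrite (dvgP q_dvg) lexx ler01.
have q01 : \forall h \near 0^', 0 <= q h <= 1.
  near=> h.
  have h0 : h != 0 by near: h; exact: nbhs_dnbhs_neq.
  have : `|h| < Num.min (x - c) (d - x).
    by near: h; apply: dnbhs0_lt; rewrite lt_min; apply/andP; split; lra.
  rewrite lt_min !ltr_norml => /andP[/andP[? ?] /andP[? ?]].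
  rewrite /q mulrC.
  have [h_gt0|h_le0] := ltP 0 h.
    have /andP[? ?] := incr x (h + x) (ltW cx) (ltac:(lra)) (ltac:(lra)).
    by rewrite divr_ge0 ?ler_pdivrMr ?mul1r //=; lra.
  have {h_le0 h0}h_lt0 : h < 0 by rewrite lt_neqAle h0.
  have /andP[? ?] := incr (h + x) x (ltac:(lra)) (ltac:(lra)) (ltW xd).
  by rewrite ler_ndivlMr // ler_ndivrMr // mul0r mul1r; apply/andP; split; lra.
apply/andP; split.
  by apply: limr_ge => //; apply: filterS q01 => h /andP[].
by apply: limr_le => //; apply: filterS q01 => h /andP[].
Unshelve. all: by end_near.
Qed.

Section IntegralFacts.
Context d (T : measurableType d) (R : realType) (mu : measure T R).

Lemma ge0_le_integral_subset (D D' : set T) (f g : T -> \bar R) : D' `<=` D ->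
  (forall x, D x -> 0 <= g x)%E -> (forall x, D' x -> 0 <= f x)%E ->
  (forall x, D' x -> f x <= g x)%E ->
  (\int[mu]_(x in D') f x <= \int[mu]_(x in D) g x)%E.
Proof.
move=> D'D g0 f0 fg; rewrite !ge0_integralE //.
apply: ereal_sup_le => _ [h hf <-]; exists h => // x.
apply: le_trans (hf x) _; rewrite /patch; case: ifPn => [/set_mem D'x|_].
  by rewrite mem_set ?fg //; exact: D'D.
by case: ifPn => // /set_mem /g0.
Qed.

Lemma integrable_cst_fin (D : set T) (k : R) : measurable D -> (mu D < +oo)%E ->
  mu.-integrable D (EFin \o cst k).
Proof.
move=> mD muD; apply: measurable_bounded_integrable => //.
exact: bounded_cst.
Qed.

Lemma integrable_sqr (D : set T) (g : T -> R) : measurable_fun D g ->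
  (\int[mu]_(x in D) (g x ^+ 2)%:E < +oo)%E -> mu.-integrable D (EFin \o (fun x => g x ^+ 2)).
Proof.
move=> mg g2_fin; apply/integrableP; split.
  by apply/measurable_EFinP; under eq_fun do rewrite expr2; exact: measurable_funM.
by under eq_integral do rewrite /= ger0_norm ?sqr_ge0 //.
Qed.

(* Uses [|g| <= 1 + g ^ 2]. *)
Lemma integrable_of_sqr (D : set T) (g : T -> R) : measurable D -> (mu D < +oo)%E ->
  measurable_fun D g -> (\int[mu]_(x in D) (g x ^+ 2)%:E < +oo)%E ->
  mu.-integrable D (EFin \o g).
Proof.
move=> mD muD mg g2_fin.
have i1g2 : mu.-integrable D (EFin \o (fun x => 1 + g x ^+ 2)).
  apply: (eq_integrable _ (fun x => 1%:E + (g x ^+ 2)%:E)%E) => //.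
  apply: integrableD => //; first exact: integrable_cst_fin.
  exact: integrable_sqr.
apply: le_integrable i1g2 => //; first exact/measurable_EFinP.
move=> x _; rewrite /= lee_fin [leRHS]ger0_norm ?addr_ge0 ?sqr_ge0 //.
rewrite -real_normK ?num_real //.
by have := sqr_ge0 (`|g x| - 1 / 2); have := normr_ge0 (g x); nra.
Qed.

Lemma integrableD_EFin (D : set T) (f g : T -> R) : measurable D ->
  mu.-integrable D (EFin \o f) -> mu.-integrable D (EFin \o g) ->
  mu.-integrable D (EFin \o (fun x => f x + g x)).
Proof.
move=> mD f_int g_int.
by apply: eq_integrable (integrableD mD f_int g_int) => // x _; rewrite /= EFinD.
Qed.

Lemma integrableZl_EFin (D : set T) (k : R) (f : T -> R) : measurable D ->
  mu.-integrable D (EFin \o f) -> mu.-integrable D (EFin \o (fun x => k * f x)).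
Proof.
move=> mD f_int.
by apply: eq_integrable (integrableZl mD k f_int) => // x _; rewrite /= EFinM.
Qed.

End IntegralFacts.

Section LebesgueInterval.
Variable R : realType.
Local Notation mu := (@lebesgue_measure R).

Lemma lebesgue_measure_itv_cc (a b : R) : a < b -> mu `[a, b] = (b - a)%:E.
Proof. by move=> ab; rewrite lebesgue_measure_itv /= lte_fin ab -EFinD. Qed.

Lemma lebesgue_measure_set2 (a b : R) : mu ([set a] `|` [set b]) = 0%E.
Proof. by rewrite measureU0 //; exact: lebesgue_measure_set1. Qed.

Lemma derive1_Rintegral_ae (a b : R) (f g : R -> R) : a < b ->
  mu.-integrable `[a, b] (EFin \o g) ->
  (forall x, a <= x <= b -> f x = f a + Rintegral mu `[a, x] g) ->
  exists N, [/\ measurable N, mu N = 0%E &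
    forall x, a < x < b -> ~ N x -> derive1 f x = g x].
Proof.
move=> ab ig fg; pose G := g \_ `[a, b].
have [N [mN N0 leb_N]] : \forall x \ae mu, lebesgue_pt G x.
  by apply/lebesgue_differentiation/integrable_locally_restrict => //; exact: measurable_itv.
exists N; split => // x /andP[ax xb] Nx.
have Gx : lebesgue_pt G x by apply: contrapT => /leb_N.
have G_g y : a <= y <= b -> G y = g y.
  by move=> yab; rewrite /G patchE mem_set //= in_itv.
have iG : mu.-integrable `[a, b] (EFin \o G).
  apply: eq_integrable ig => [|y]; first exact: measurable_itv.
  by rewrite inE /= in_itv /= => /G_g ->.
have [dF F'] := FTC1_lebesgue_pt xb iG (ltac:(by rewrite /= lte_fin)) Gx.
set F := fun y => _ in dF F'.
have xab : a <= x <= b by apply/andP; split; apply: ltW.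
have dF' : is_derive x 1 F (g x).
  by apply: DeriveDef dF _; rewrite -derive1E F' G_g.
have near_f : \forall y \near x, (cst (f a) + F) y = f y.
  have /near_in_itvoo : x \in `]a, b[ by rewrite in_itv /= ax xb.
  apply: filterS => y; rewrite in_itv /= => /andP[ay yb].
  rewrite [RHS]fg ?ltW ?ay //; congr (_ + _); apply: eq_Rintegral => t.
  by rewrite inE /= in_itv /= => /andP[au uy]; rewrite G_g // au (le_trans uy (ltW yb)).
have dfF : is_derive x 1 (cst (f a) + F) (0 + g x) by apply: is_deriveD.
rewrite add0r in dfF; rewrite derive1E; apply: derive_val.
exact: near_eq_is_derive near_f dfF.
Qed.

Lemma Rintegral_sqr_ge (a b : R) (g : R -> R) : a < b ->
  mu.-integrable `[a, b] (EFin \o g) ->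
  mu.-integrable `[a, b] (EFin \o (fun x => g x ^+ 2)) ->
  (Rintegral mu `[a, b] g) ^+ 2 / (b - a) <= Rintegral mu `[a, b] (fun x => g x ^+ 2).
Proof.
move=> ab g_int g2_int.
have mab : measurable `[a, b] by exact: measurable_itv.
have ab_fin : (mu `[a, b] < +oo)%E by rewrite lebesgue_measure_itv_cc // ltry.
set I := Rintegral mu `[a, b] g; pose c := I / (b - a).
have cg_int := integrableZl_EFin (mu := mu) (2 * c) mab g_int.
have c2_int := integrable_cst_fin (mu := mu) (- c ^+ 2) mab ab_fin.
(* [g ^ 2 >= 2 c g - c ^ 2] pointwise, with [c] the mean value of [g] *)
have <- : Rintegral mu `[a, b] (fun x => 2 * c * g x + - c ^+ 2) = I ^+ 2 / (b - a).
  rewrite RintegralD // RintegralZl // Rintegral_cst //.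
  rewrite -[X in fine X]/(mu `[a, b]) lebesgue_measure_itv_cc //=.
  by rewrite -/I /c; field; rewrite subr_eq0 gt_eqF.
apply: le_Rintegral => //; first exact: integrableD_EFin.
by move=> x _; have := sqr_ge0 (g x - c); nra.
Qed.

Lemma Dir_le (f1 f2 : R -> R) (a b C : R) : a < b ->
  (forall x, a < x < b -> (derive1 f1 x) ^+ 2 + (derive1 f2 x) ^+ 2 <= C) ->
  (Dir f1 f2 a b <= (C * (b - a))%:E)%E.
Proof.
move=> ab slope; rewrite /Dir.
set e := fun x => (derive1 f1 x) ^+ 2 + (derive1 f2 x) ^+ 2 in slope *.
have e0 x : 0 <= e x by rewrite addr_ge0 ?sqr_ge0.
have C0 : 0 <= C by apply: le_trans (e0 ((a + b) / 2)) (slope _ _); apply/andP; split; lra.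
have mab : measurable `[a, b] by exact: measurable_itv.
pose S := [set a] `|` [set b]; pose K := e a + e b.
have mS : measurable S by apply: measurableU; exact: measurable_set1.
have K0 : 0 <= K by rewrite addr_ge0.
have K1S0 x : 0 <= K * \1_S x by rewrite mulr_ge0 // indicE.
(* the endpoints are negligible, so [e] may be bounded by [C] off them and by [K] on them *)
apply: (@le_trans _ _ (\int[mu]_(x in `[a, b]) (C%:E + K%:E * (\1_S x)%:E))%E).
  apply: ge0_le_integral_subset => // x.
  - by move=> _; rewrite adde_ge0 ?lee_fin // -EFinM.
  - by move=> _; rewrite lee_fin; exact: e0.
  rewrite /= in_itv /= -EFinM -EFinD lee_fin => /andP[ax xb].
  change (e x <= C + K * \1_S x); rewrite indicE.
  have [->|xa] := @eqVneq R x a; first by rewrite mem_set ?mulr1 /K; [have := e0 b; lra | left].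
  have [->|xb'] := @eqVneq R x b; first by rewrite mem_set ?mulr1 /K; [have := e0 a; lra | right].
  rewrite memNset ?mulr0 ?addr0; first by apply: slope; rewrite !lt_neqAle eq_sym xa xb' ax xb.
  by case; apply/eqP.
have C_ge0 x : [set` `[a, b]] x -> (0 <= C%:E)%E by rewrite lee_fin.
have indic_ge0 x : [set` `[a, b]] x -> (0 <= (\1_S x : R)%:E)%E by rewrite lee_fin indicE.
have KS_ge0 x : [set` `[a, b]] x -> (0 <= K%:E * (\1_S x)%:E)%E.
  by rewrite -EFinM lee_fin.
rewrite (ge0_integralD mu mab C_ge0 (measurable_cst _) KS_ge0); last first.
  by apply: measurable_funeM; apply/measurable_EFinP; exact: measurable_indic.
rewrite integral_cst // (ge0_integralZl_EFin mu mab indic_ge0 _ K0); last first.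
  by apply/measurable_EFinP; exact: measurable_indic.
rewrite integral_indic // -[X in (_ + _ * X)%E]/(mu (S `&` `[a, b])).
have -> : mu (S `&` `[a, b]) = 0%E.
  apply/eqP; rewrite eq_le measure_ge0 andbT -(lebesgue_measure_set2 a b).
  exact: measureIl.
by rewrite mule0 adde0 -[X in (_ * X)%E]/(mu `[a, b]) lebesgue_measure_itv_cc.
Qed.

Lemma Dir_ge_W12 (a b : R) (v1 v2 : R -> R) : a < b -> W12 a b v1 -> W12 a b v2 ->
  ((((v1 b - v1 a) ^+ 2 + (v2 b - v2 a) ^+ 2) / (b - a))%:E <= Dir v1 v2 a b)%E.
Proof.
move=> ab [g1 [mg1 [g1_fin v1g]]] [g2 [mg2 [g2_fin v2g]]].
have mab : measurable `[a, b] by exact: measurable_itv.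
have ab_fin : (mu `[a, b] < +oo)%E by rewrite lebesgue_measure_itv_cc // ltry.
have g1_int := integrable_of_sqr (mu := mu) mab ab_fin mg1 g1_fin.
have g2_int := integrable_of_sqr (mu := mu) mab ab_fin mg2 g2_fin.
have g1sq_int := integrable_sqr (mu := mu) mg1 g1_fin.
have g2sq_int := integrable_sqr (mu := mu) mg2 g2_fin.
have gsq_int := integrableD_EFin (mu := mu) mab g1sq_int g2sq_int.
have bab : a <= b <= b by rewrite lexx ltW.
have v1ab : v1 b - v1 a = Rintegral mu `[a, b] g1 by rewrite [v1 b]v1g // addrC addKr.
have v2ab : v2 b - v2 a = Rintegral mu `[a, b] g2 by rewrite [v2 b]v2g // addrC addKr.
have [N1 [mN1 N1_0 dv1]] := derive1_Rintegral_ae ab g1_int v1g.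
have [N2 [mN2 N2_0 dv2]] := derive1_Rintegral_ae ab g2_int v2g.
pose M := N1 `|` N2 `|` ([set a] `|` [set b]).
have mM : measurable M.
  by apply: measurableU; apply: measurableU.
have M0 : mu M = 0%E.
  rewrite measureU0 //; [|exact: measurableU|exact: measurableU|exact: lebesgue_measure_set2].
  by rewrite measureU0.
apply: (@le_trans _ _ (Rintegral mu `[a, b] (fun x => g1 x ^+ 2 + g2 x ^+ 2))%:E).
  rewrite lee_fin RintegralD // v1ab v2ab mulrDl.
  by apply: lerD; exact: Rintegral_sqr_ge.
rewrite fineK ?integrable_fin_num // (negligible_integral mM mab gsq_int M0).
apply: ge0_le_integral_subset => // [x _|x _|x [/= + nMx]].
- by rewrite lee_fin addr_ge0 ?sqr_ge0.
- by rewrite lee_fin addr_ge0 ?sqr_ge0.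
rewrite in_itv /= => /andP[ax xb].
have xa : x != a by apply/eqP => xa; apply: nMx; rewrite xa /M; right; left.
have xb' : x != b by apply/eqP => xb'; apply: nMx; rewrite xb' /M; right; right.
have axb : a < x < b by rewrite !lt_neqAle eq_sym xa xb' ax xb.
by rewrite dv1 ?dv2 // => [N2x|N1x]; apply: nMx; rewrite /M; [left; right | left; left].
Qed.

Lemma Dir_pinched_le (umin umax : R -> R) (a b : R) :
  (forall y z, 0 <= y -> y <= z -> z <= 1 -> pinched_slopes umin umax y z) ->
  0 <= a -> a < b -> b <= 1 -> (Dir umin umax a b <= (2 * (b - a))%:E)%E.
Proof.
move=> pinched a0 ab b1; apply: Dir_le => // x /andP[ax xb].
have slope01 F : (forall y z, 0 <= y -> y <= z -> z <= 1 -> 0 <= F z - F y <= z - y) ->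
    0 <= derive1 F x <= 1.
  by move=> incr; apply: (derive1_unit_slope incr); lra.
have /andP[? ?] : 0 <= derive1 umin x <= 1 by apply: slope01 => y z *; case: (pinched y z).
have /andP[? ?] : 0 <= derive1 umax x <= 1 by apply: slope01 => y z *; case: (pinched y z).
nra.
Qed.

End LebesgueInterval.

Lemma half_le_sumsqr_div (R : realFieldType) (L d1 d2 : R) : 0 < L -> L <= d1 + d2 ->
  L / 2 <= (d1 ^+ 2 + d2 ^+ 2) / L.
Proof.
move=> L0 Ld; rewrite ler_pdivlMr //.
have : L * L <= (d1 + d2) * (d1 + d2) by apply: ler_pM; lra.
by have := sqr_ge0 (d1 - d2); nra.
Qed.

Theorem mainTheorem5 (R : realType) (lo hi : nat -> R -> R) (phi : nat -> nat)
    (umin umax : R -> R) :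
  (forall i : nat, (0 < i)%N -> cantor_pluridiamond i (lo i) (hi i)) ->
  {homo phi : m n / (m < n)%N} ->
  unif_cvg01 (fun n => lo (phi n)) umin ->
  unif_cvg01 (fun n => hi (phi n)) umax ->
  dir_quasiminimizer 4 umin umax /\ branch_set umin umax = @cantorT R.
Proof.
move=> pluri phi_incr lo_cvg hi_cvg.
split; last exact: branch_set_eq_cantor pluri phi_incr lo_cvg hi_cvg.
move=> a b a0 ab b1 v1 v2 [[[W1 W2 _] [va1 va2 vb1 vb2]] _].
have pinched := limit_pinched pluri phi_incr lo_cvg hi_cvg.
have [_ _ incr] := pinched a b a0 (ltW ab) b1.
have := Dir_ge_W12 ab W1 W2; rewrite va1 va2 vb1 vb2 => Dir_v.
apply: le_trans (Dir_pinched_le pinched a0 ab b1) _.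
have four_ge0 : (0 <= 4%:E :> \bar R)%E by rewrite lee_fin.
apply: le_trans (lee_wpmul2l four_ge0 Dir_v).
rewrite -EFinM lee_fin (_ : 2 * (b - a) = 4 * ((b - a) / 2)); last by field.
rewrite ler_pM2l //; apply: half_le_sumsqr_div => //; lra.
Qed.
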